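(* Let $\mathbb U$ be the universal Urysohn space and let $X$ be a compact metric space. (1) If $X$ is a Rakotch fractal, then $X$ is isometric to the attractor $A_{\mathcal{G}}$ of a function system $\mathcal{G}$ consisting of Rakotch contractions of $\mathbb U$. (2) If $X$ is a Banach fractal, then $X$ is isometric to the attractor $A_{\mathcal{G}}$ of a function system $\mathcal{G}$ consisting of Banach contractions of $\mathbb U$.
   Context: The universal Urysohn space $\mathbb U$ is the (unique up to isometry) separable complete metric space such that every isometric embedding $f:B\to\mathbb U$ of a subspace $B$ of a finite metric space $A$ extends to an isometric embedding $\bar f:A\to\mathbb U$. A function system on a metric space $X$ is a finite family of continuous self-maps of $X$; it induces $\mathcal{F}:\mathbb K(X)\to\mathbb K(X)$, $K\mapsto\bigcup_{f\in\mathcal{F}}f(K)$, on the space $\mathbb K(X)$ of non-empty compact subsets of $X$ with the Hausdorff metric. A compact $A\in\mathbb K(X)$ is the attractor $A_{\mathcal{F}}$ of $\mathcal{F}$ if $\mathcal{F}(A)=A$ and $\mathcal{F}^n(K)\to A$ in $\mathbb K(X)$ for every $K\in\mathbb K(X)$. A map $f:(X,d_X)\to(Y,d_Y)$ is Rakotch contracting if there is $\varphi:[0,\infty)\to[0,\infty)$ with $d_Y(f(x),f(x'))\le\varphi(d_X(x,x'))$ for all $x,x'$ and $\sup_{a<t<\infty}\varphi(t)/t<1$ for every $a>0$; it is a Banach contraction if it is Lipschitz with Lipschitz constant $<1$. A compact metric space $X$ is a Rakotch fractal (resp. Banach fractal) if $X=\bigcup_{f\in\mathcal{F}}f(X)$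 for some function system $\mathcal{F}$ consisting of Rakotch contractions (resp. Banach contractions) of $X$. *)

From Stdlib Require Import Reals List.
Open Scope R_scope.

Record MetricSpace := {
  carrier :> Type;
  dist : carrier -> carrier -> R;
  dist_nonneg : forall x y, 0 <= dist x y;
  dist_eq0 : forall x y, dist x y = 0 <-> x = y;
  dist_sym : forall x y, dist x y = dist y x;
  dist_tri : forall x y z, dist x z <= dist x y + dist y z
}.
Arguments dist {m} x y.

Section Defs.
Context {M N : MetricSpace}.

Definition seq_conv (u : nat -> M) (l : M) : Prop :=
  forall eps, 0 < eps -> exists n0, forall n, (n >= n0)%nat -> dist (u n) l < eps.

Definition cauchy (u : nat -> M) : Prop :=
  forall eps, 0 < eps -> exists n0, forall n m, (n >= n0)%nat -> (m >= n0)%nat ->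
    dist (u n) (u m) < eps.

Definition compact_set (K : M -> Prop) : Prop :=
  forall u : nat -> M, (forall n, K (u n)) ->
    exists phi : nat -> nat, (forall n, (phi n < phi (S n))%nat) /\
      exists l, K l /\ seq_conv (fun n => u (phi n)) l.

Definition nonempty_compact (K : M -> Prop) : Prop :=
  (exists x, K x) /\ compact_set K.

Definition continuous_map (f : M -> N) : Prop :=
  forall x eps, 0 < eps -> exists delta, 0 < delta /\
    forall y, dist x y < delta -> dist (f x) (f y) < eps.

Definition isometric_embedding (g : M -> N) : Prop :=
  forall x y, dist (g x) (g y) = dist x y.

Definition rakotch_contraction (f : M -> N) : Prop :=
  exists phi : R -> R,
    (forall t, 0 <= t -> 0 <= phi t) /\
    (forall x x', dist (f x) (f x') <= phi (dist x x')) /\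
    (forall a, 0 < a -> exists c, c < 1 /\ forall t, a < t -> phi t / t <= c).

Definition banach_contraction (f : M -> N) : Prop :=
  exists L, 0 <= L /\ L < 1 /\ forall x x', dist (f x) (f x') <= L * dist x x'.
End Defs.

Section FS.
Context {M : MetricSpace}.

Definition compact_space : Prop := @compact_set M (fun _ => True).

Definition function_system (F : list (M -> M)) : Prop :=
  F <> nil /\ forall f, In f F -> continuous_map f.

Definition fs_image (F : list (M -> M)) (K : M -> Prop) : M -> Prop :=
  fun y => exists f, In f F /\ exists x, K x /\ y = f x.

Fixpoint fs_iter (F : list (M -> M)) (n : nat) (K : M -> Prop) : M -> Prop :=
  match n with
  | O => K
  | S n => fs_image F (fs_iter F n K)
  end.

Definition hausdorff_conv (Kn : nat -> M -> Prop) (A : M -> Prop) : Prop :=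
  forall eps, 0 < eps -> exists n0, forall n, (n >= n0)%nat ->
    (forall x, Kn n x -> exists a, A a /\ dist x a < eps) /\
    (forall a, A a -> exists x, Kn n x /\ dist x a < eps).

Definition is_attractor (F : list (M -> M)) (A : M -> Prop) : Prop :=
  nonempty_compact A /\
  (forall y, fs_image F A y <-> A y) /\
  (forall K, nonempty_compact K -> hausdorff_conv (fun n => fs_iter F n K) A).

Definition rakotch_fractal : Prop :=
  compact_space /\ exists F, function_system F /\
    (forall f, In f F -> rakotch_contraction f) /\
    (forall x, exists f, In f F /\ exists y, x = f y).

Definition banach_fractal : Prop :=
  compact_space /\ exists F, function_system F /\
    (forall f, In f F -> banach_contraction f) /\
    (forall x, exists f, In f F /\ exists y, x = f y).
End FS.
Arguments compact_space M : clear implicits.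
Arguments rakotch_fractal M : clear implicits.
Arguments banach_fractal M : clear implicits.

Definition separable (U : MetricSpace) : Prop :=
  exists s : nat -> U, forall x eps, 0 < eps -> exists n, dist (s n) x < eps.

Definition complete (U : MetricSpace) : Prop :=
  forall u : nat -> U, cauchy u -> exists l, seq_conv u l.

Definition finite_space (A : MetricSpace) : Prop :=
  exists l : list A, forall x, In x l.

Definition finite_extension_property (U : MetricSpace) : Prop :=
  forall (A : MetricSpace), finite_space A ->
  forall (B : A -> Prop) (f : A -> U),
    (forall x y, B x -> B y -> dist (f x) (f y) = dist x y) ->
    exists g : A -> U, isometric_embedding g /\ (forall x, B x -> g x = f x).

Definition urysohn_space (U : MetricSpace) : Prop :=
  separable U /\ complete U /\ finite_extension_property U.

Definition isometric_to_subset (X U : MetricSpace) (A : U -> Prop) : Prop :=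
  exists g : X -> U, isometric_embedding g /\ (forall u, A u <-> exists x, g x = u).

(* Let M bound the diameter of X. The Kuratowski map x |-> d(x, -) embeds X isometrically into the
   space Z of 1-Lipschitz functions X -> [0, M] with the sup metric; Z is separable, and a separable
   space embeds isometrically into U by extending isometries along an increasing sequence of finite
   sets (finite extension property) and passing to the limit (completeness). Call e : X -> U the
   composite embedding.

   A self-map f of X with a monotone subadditive Rakotch modulus psi extends to Z with the same
   modulus through a McShane-type infimum formula, and is pulled back to U along the nonexpansive
   map u |-> d(u, e(-)) : U -> Z, which restricts to the Kuratowski map on e(X). The lifted maps
   satisfy g_f o e = e o f, so e(X) is invariant, and they share the Rakotch modulus max_f psi_f,
   whose iterates tend to 0; hence the iterates of every compact set converge to e(X) in the
   Hausdorff metric. For a Rakotch contraction such a modulus is a concave envelope of its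
   contraction bounds; for a Banach contraction it is linear, so the lifts are again Banach. *)

From Stdlib Require Import Reals Lra Lia List ClassicalEpsilon FunctionalExtensionality.
Open Scope R_scope.

Definition Rsup (E : R -> Prop) : R :=
  match excluded_middle_informative (bound E /\ exists x, E x) with
  | left H => proj1_sig (completeness E (proj1 H) (proj2 H))
  | right _ => 0 end.

Lemma Rsup_is_lub E : bound E -> (exists x, E x) -> is_lub E (Rsup E).
Proof.
  intros Hb He. unfold Rsup. destruct excluded_middle_informative as [H|H].
  - destruct (completeness E _ _) as [m Hm]. exact Hm.
  - exfalso; tauto.
Qed.

Definition sup_img {T : Type} (g : T -> R) : R := Rsup (fun r => exists x, r = g x).
Definition inf_img {T : Type} (g : T -> R) : R := - sup_img (fun x => - g x).

Lemma sup_img_ub {T} (g : T -> R) B x : (forall y, g y <= B) -> g x <= sup_img g.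
Proof.
  intros HB. destruct (Rsup_is_lub (fun r => exists x, r = g x)) as [H1 _].
  - exists B. intros r [y ->]. apply HB.
  - exists (g x), x. reflexivity.
  - apply H1. eauto.
Qed.

Lemma sup_img_least {T} (g : T -> R) B (x0 : T) : (forall y, g y <= B) -> sup_img g <= B.
Proof.
  intros HB. destruct (Rsup_is_lub (fun r => exists x, r = g x)) as [_ H2].
  - exists B. intros r [y ->]. apply HB.
  - exists (g x0), x0. reflexivity.
  - apply H2. intros r [y ->]. apply HB.
Qed.

Lemma inf_img_lb {T} (g : T -> R) B x : (forall y, B <= g y) -> inf_img g <= g x.
Proof.
  intros HB. unfold inf_img.
  enough (- g x <= sup_img (fun x => - g x)) by lra.
  apply (sup_img_ub (fun x => - g x) (- B)). intros y; specialize (HB y); lra.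
Qed.

Lemma inf_img_greatest {T} (g : T -> R) B (x0 : T) : (forall y, B <= g y) -> B <= inf_img g.
Proof.
  intros HB. unfold inf_img.
  enough (sup_img (fun x => - g x) <= - B) by lra.
  apply (sup_img_least (fun x => - g x) _ x0). intros y; specialize (HB y); lra.
Qed.

Lemma inf_img_shift {T} (g h : T -> R) c (x0 : T) B :
  (forall y, B <= g y) -> (forall y, B <= h y) ->
  (forall y, g y <= h y + c) -> inf_img g <= inf_img h + c.
Proof.
  intros Hg Hh H.
  enough (inf_img g - c <= inf_img h) by lra.
  apply (inf_img_greatest _ _ x0). intros y.
  pose proof (inf_img_lb g B y Hg). specialize (H y). lra.
Qed.

Lemma nat_above r : exists n : nat, r < INR n.
Proof. destruct (INR_archimed 1 r Rlt_0_1) as [n Hn]. exists n. lra. Qed.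

Lemma inv_succ_lt eps : 0 < eps -> exists N : nat, / (INR N + 1) < eps.
Proof.
  intros He. destruct (INR_archimed eps 1 He) as [N HN]. exists N.
  pose proof (pos_INR N).
  apply (Rmult_lt_reg_r (INR N + 1)); [lra|]. rewrite Rinv_l by lra. nra.
Qed.

Lemma inv_succ_pos k : 0 < / (INR k + 1).
Proof. apply Rinv_0_lt_compat. pose proof (pos_INR k). lra. Qed.

Lemma inv_succ_le n m : (n <= m)%nat -> / (INR m + 1) <= / (INR n + 1).
Proof.
  intros H. apply le_INR in H. pose proof (pos_INR n).
  apply Rinv_le_contravar; lra.
Qed.

Lemma exists_nat_floor y d : 0 <= y -> 0 < d -> exists j : nat, INR j * d <= y < (INR j + 1) * d.
Proof.
  intros Hy Hd. destruct (INR_archimed d y Hd) as [N HN].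
  induction N as [|N IH].
  - simpl in HN. lra.
  - destruct (Rlt_dec y (INR N * d)) as [H|H]; [exact (IH H)|].
    exists N. rewrite S_INR in HN. lra.
Qed.

Definition clamp (M t : R) : R := Rmax 0 (Rmin t M).

Lemma clamp_nonexpansive M a b : 0 <= M -> Rabs (clamp M a - clamp M b) <= Rabs (a - b).
Proof.
  intros HM. unfold clamp, Rmax, Rmin.
  repeat destruct Rle_dec; unfold Rabs; repeat destruct Rcase_abs; lra.
Qed.

Lemma clamp_id M a : 0 <= a <= M -> clamp M a = a.
Proof. intros H. unfold clamp, Rmax, Rmin. repeat destruct Rle_dec; lra. Qed.

Lemma clamp_bounds M a : 0 <= M -> 0 <= clamp M a <= M.
Proof. intros H. unfold clamp, Rmax, Rmin. repeat destruct Rle_dec; lra. Qed.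

Definition has_modulus {M N : MetricSpace} (f : M -> N) (psi : R -> R) : Prop :=
  forall x y, dist (f x) (f y) <= psi (dist x y).

Section MetricFacts.
Context {M : MetricSpace}.

Lemma dist_refl (x : M) : dist x x = 0.
Proof. apply (dist_eq0 M). reflexivity. Qed.

Lemma dist_reverse_tri (x y z : M) : Rabs (dist x z - dist y z) <= dist x y.
Proof.
  pose proof (dist_tri M x y z). pose proof (dist_tri M y x z).
  rewrite (dist_sym M y x) in H0. apply Rabs_le. lra.
Qed.

Lemma dist_quad (a b p q : M) : Rabs (dist a b - dist p q) <= dist a p + dist b q.
Proof.
  pose proof (dist_reverse_tri a p b). pose proof (dist_reverse_tri b q p).
  rewrite (dist_sym M b p), (dist_sym M q p) in H0.
  pose proof (Rabs_triang (dist a b - dist p b) (dist p b - dist p q)).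
  replace (dist a b - dist p b + (dist p b - dist p q)) with (dist a b - dist p q) in H1 by ring.
  lra.
Qed.

Lemma dist_seq_conv (a b : nat -> M) p q :
  seq_conv a p -> seq_conv b q -> Un_cv (fun n => dist (a n) (b n)) (dist p q).
Proof.
  intros Ha Hb eps He.
  destruct (Ha (eps / 2) ltac:(lra)) as [Na HNa]. destruct (Hb (eps / 2) ltac:(lra)) as [Nb HNb].
  exists (Na + Nb)%nat. intros n Hn. unfold R_dist.
  pose proof (dist_quad (a n) (b n) p q). pose proof (HNa n ltac:(lia)). pose proof (HNb n ltac:(lia)).
  lra.
Qed.

Lemma seq_conv_cauchy (u : nat -> M) l : seq_conv u l -> cauchy u.
Proof.
  intros Hu eps He. destruct (Hu (eps / 2) ltac:(lra)) as [N HN]. exists N. intros n m Hn Hm.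
  pose proof (dist_tri M (u n) l (u m)). rewrite (dist_sym M l) in H.
  pose proof (HN n Hn). pose proof (HN m Hm). lra.
Qed.

Lemma list_dist_bounded (L : list M) (z : M) : exists B, forall p, In p L -> dist p z <= B.
Proof.
  induction L as [|a L [B HB]]; [exists 0; intros p []|].
  exists (Rmax (dist a z) B). intros p [<-|Hp]; [apply Rmax_l|].
  eapply Rle_trans; [apply HB, Hp|apply Rmax_r].
Qed.

Lemma compact_set_finite_net (K : M -> Prop) : compact_set K -> forall eps, 0 < eps ->
  exists L : list M, forall x, K x -> exists p, In p L /\ dist x p < eps.
Proof.
  (* Otherwise a greedy choice yields an eps-separated sequence in K, with no convergent subsequence. *)
  intros HK eps Heps. apply NNPP. intros Hn.
  assert (Hc : forall L : list M, exists x, K x /\ forall p, In p L -> eps <= dist x p).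
  { intros L. apply NNPP. intros H2. apply Hn. exists L. intros x Kx.
    apply NNPP. intros H3. apply H2. exists x. split; auto. intros p Hp.
    apply Rnot_lt_le. intros Hlt. apply H3. eauto. }
  set (c := fun L => proj1_sig (constructive_indefinite_description _ (Hc L))).
  assert (Hcs : forall L, K (c L) /\ forall p, In p L -> eps <= dist (c L) p).
  { intros L. unfold c. destruct constructive_indefinite_description; auto. }
  set (pre := fix pre (n : nat) : list M := match n with O => nil | S n => c (pre n) :: pre n end).
  set (u := fun n => c (pre n)).
  assert (Hin : forall m n, (m < n)%nat -> In (u m) (pre n)).
  { intros m n. induction n; intros H; [lia|]. simpl. destruct (Nat.eq_dec m n) as [->|Hne].
    - left; reflexivity.
    - right. apply IHn; lia. }
  destruct (HK u (fun n => proj1 (Hcs _))) as [phi [Hphi [l [Kl Hl]]]].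
  destruct (Hl (eps/2) ltac:(lra)) as [n0 Hn0].
  pose proof (Hn0 n0 ltac:(lia)) as A1. pose proof (Hn0 (S n0) ltac:(lia)) as A2.
  pose proof (proj2 (Hcs (pre (phi (S n0)))) (u (phi n0)) (Hin _ _ (Hphi n0))) as A3.
  fold (u (phi (S n0))) in A3.
  pose proof (dist_tri M (u (phi (S n0))) l (u (phi n0))). rewrite (dist_sym M l) in H. lra.
Qed.

Lemma compact_set_bounded (K : M -> Prop) : compact_set K ->
  exists B, 0 <= B /\ forall x y, K x -> K y -> dist x y <= B.
Proof.
  intros HK. destruct (compact_set_finite_net K HK 1 Rlt_0_1) as [L HL].
  destruct L as [|z L].
  - exists 0. split; [lra|]. intros x y Kx. destruct (HL x Kx) as [p [[] _]].
  - destruct (list_dist_bounded (z :: L) z) as [B HB].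
    assert (HB0 : 0 <= B) by (pose proof (HB z (or_introl eq_refl)); pose proof (dist_nonneg M z z); lra).
    exists (2 + 2 * B). split; [lra|].
    intros x y Kx Ky. destruct (HL x Kx) as [p [Hp Dp]]. destruct (HL y Ky) as [q [Hq Dq]].
    pose proof (HB p Hp). pose proof (HB q Hq).
    pose proof (dist_tri M x p y). pose proof (dist_tri M p z y). pose proof (dist_tri M z q y).
    rewrite (dist_sym M z q) in H3. rewrite (dist_sym M q y) in H3. lra.
Qed.

Lemma isometric_image_compact {N : MetricSpace} (e : M -> N) :
  isometric_embedding e -> compact_space M -> compact_set (fun u => exists x, e x = u).
Proof.
  intros He HM u Hu. destruct (choice _ Hu) as [xs Hxs].
  destruct (HM xs (fun _ => I)) as [phi [Hphi [l [_ Hl]]]].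
  exists phi. split; [exact Hphi|]. exists (e l). split; [exists l; reflexivity|].
  intros eps Heps. destruct (Hl eps Heps) as [n0 Hn0]. exists n0. intros n Hn.
  rewrite <- Hxs, He. auto.
Qed.
End MetricFacts.

Lemma sig_eq {A : Type} {P : A -> Prop} (a b : {x | P x}) : proj1_sig a = proj1_sig b -> a = b.
Proof. destruct a, b; simpl; intros ->. f_equal. apply proof_irrelevance. Qed.

Definition sub_space (Y : MetricSpace) (P : Y -> Prop) : MetricSpace.
Proof.
  refine {| carrier := {y : Y | P y}; dist := fun a b => dist (proj1_sig a) (proj1_sig b) |}.
  - intros; apply dist_nonneg.
  - intros x y; split; intros H.
    + apply sig_eq. apply (dist_eq0 Y). exact H.
    + subst. apply dist_refl.
  - intros; apply dist_sym.
  - intros; apply dist_tri.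
Defined.

Lemma finite_sig_of_list (Y : Type) (l : list Y) : forall (P : Y -> Prop), (forall y, P y -> In y l) ->
  exists L : list {y | P y}, forall x, In x L.
Proof.
  induction l as [|a l IH]; intros P HP.
  - exists nil. intros [x Px]. destruct (HP x Px).
  - set (P' := fun y => P y /\ y <> a).
    destruct (IH P') as [L' HL'].
    { intros y [Py Hya]. destruct (HP y Py) as [->|H]; [congruence|exact H]. }
    set (mp := fun (w : {y | P' y}) => exist P (proj1_sig w) (proj1 (proj2_sig w))).
    assert (Hmp : forall x (Px : P x), x <> a -> In (exist P x Px) (map mp L')).
    { intros x Px Hxa. apply in_map_iff. exists (exist P' x (conj Px Hxa)).
      split; [apply sig_eq; reflexivity|apply HL']. }
    destruct (classic (P a)) as [Pa|nPa].
    + exists (exist P a Pa :: map mp L'). intros [x Px].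
      destruct (classic (x = a)) as [->|Hxa]; [left; apply sig_eq; reflexivity|right; auto].
    + exists (map mp L'). intros [x Px].
      destruct (classic (x = a)) as [->|Hxa]; [contradiction|auto].
Qed.

(** * Isometric embeddings into a Urysohn space *)

Section UrysohnEmbedding.
Variables (Y U : MetricSpace).
Hypotheses (HUc : complete U) (HUf : finite_extension_property U).
Variable u0 : U.
Variable D : nat -> list Y.
Hypothesis HD : forall y eps, 0 < eps -> exists k z, In z (D k) /\ dist z y < eps.

Definition isometric_on (f : Y -> U) (l : list Y) : Prop :=
  forall a b, In a l -> In b l -> dist (f a) (f b) = dist a b.

Lemma isometric_on_extend (l l' : list Y) (f : Y -> U) : isometric_on f l -> incl l l' ->
  exists f', isometric_on f' l' /\ forall a, In a l -> f' a = f a.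
Proof.
  intros Hf Hsub. set (A := sub_space Y (fun y => In y l')).
  destruct (HUf A (finite_sig_of_list Y l' _ (fun y H => H)) (fun w : A => In (proj1_sig w) l)
     (fun w : A => f (proj1_sig w))) as [g [Hg1 Hg2]].
  { intros x y Hx Hy. apply Hf; auto. }
  exists (fun y => match excluded_middle_informative (In y l') with
                   | left H => g (exist _ y H) | right _ => f y end).
  split.
  - intros a b Ha Hb.
    destruct excluded_middle_informative as [Ha'|]; [|contradiction].
    destruct excluded_middle_informative as [Hb'|]; [|contradiction].
    apply Hg1.
  - intros a Ha. destruct excluded_middle_informative as [Ha'|Ha']; [|reflexivity].
    exact (Hg2 (exist _ a Ha') Ha).
Qed.

Definition extend_isometric (l l' : list Y) (Hs : incl l l') (f : {f | isometric_on f l}) :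
  {f' | isometric_on f' l' /\ forall a, In a l -> f' a = proj1_sig f a} :=
  constructive_indefinite_description _ (isometric_on_extend l l' (proj1_sig f) (proj2_sig f) Hs).

Fixpoint stage_points (n : nat) : list Y :=
  match n with O => D O | S n => stage_points n ++ D (S n) end.

Lemma stage_points_incl n : incl (stage_points n) (stage_points (S n)).
Proof. intros a H. apply in_or_app. left; exact H. Qed.

Lemma stage_points_mono n m : (n <= m)%nat -> incl (stage_points n) (stage_points m).
Proof. induction 1; [apply incl_refl|]. eapply incl_tran; [eassumption|apply stage_points_incl]. Qed.

Lemma D_stage_points k : incl (D k) (stage_points k).
Proof. destruct k; simpl; [apply incl_refl|]. apply incl_appr, incl_refl. Qed.

Fixpoint stage_sig (n : nat) : {f | isometric_on f (stage_points n)} :=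
  match n with
  | O => let s := extend_isometric nil (stage_points O) (incl_nil_l _)
                    (exist (fun f => isometric_on f nil) (fun _ => u0) (fun a b H => match H with end)) in
         exist _ (proj1_sig s) (proj1 (proj2_sig s))
  | S n => let s := extend_isometric (stage_points n) (stage_points (S n)) (stage_points_incl n) (stage_sig n) in
         exist _ (proj1_sig s) (proj1 (proj2_sig s))
  end.

Definition stage n : Y -> U := proj1_sig (stage_sig n).

Lemma stage_succ n a : In a (stage_points n) -> stage (S n) a = stage n a.
Proof. intros H. unfold stage. simpl. destruct extend_isometric as [f' [H1 H2]]. exact (H2 a H). Qed.

Lemma stage_stable n m a : (n <= m)%nat -> In a (stage_points n) -> stage m a = stage n a.
Proof.
  induction 1; intros Ha; [reflexivity|].
  rewrite stage_succ; [auto|]. apply (stage_points_mono n); auto.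
Qed.

Lemma stage_dist n1 n2 a b : In a (stage_points n1) -> In b (stage_points n2) ->
  dist (stage n1 a) (stage n2 b) = dist a b.
Proof.
  intros Ha Hb. set (k := max n1 n2).
  rewrite <- (stage_stable n1 k a), <- (stage_stable n2 k b) by (auto; lia).
  apply (proj2_sig (stage_sig k)); [apply (stage_points_mono n1)|apply (stage_points_mono n2)]; auto; lia.
Qed.

Lemma approx_exists y (m : nat) :
  exists p : nat * Y, In (snd p) (stage_points (fst p)) /\ dist (snd p) y < / (INR m + 1).
Proof.
  destruct (HD y (/ (INR m + 1)) (inv_succ_pos m)) as [k [z [Hz Hzy]]].
  exists (k, z). split; [apply D_stage_points|]; auto.
Qed.

Definition approx y m := proj1_sig (constructive_indefinite_description _ (approx_exists y m)).

Lemma approx_spec y m :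
  In (snd (approx y m)) (stage_points (fst (approx y m))) /\ dist (snd (approx y m)) y < / (INR m + 1).
Proof. unfold approx. destruct constructive_indefinite_description; auto. Qed.

Definition approx_image y m := stage (fst (approx y m)) (snd (approx y m)).

Lemma approx_image_dist y y' m m' :
  dist (approx_image y m) (approx_image y' m') = dist (snd (approx y m)) (snd (approx y' m')).
Proof. apply stage_dist; apply approx_spec. Qed.

Lemma approx_conv y : seq_conv (fun m => snd (approx y m)) y.
Proof.
  intros eps He. destruct (inv_succ_lt eps He) as [N HN]. exists N. intros m Hm.
  pose proof (proj2 (approx_spec y m)). pose proof (inv_succ_le N m Hm). lra.
Qed.

Lemma approx_image_cauchy y : cauchy (approx_image y).
Proof.
  intros eps He. destruct (seq_conv_cauchy _ _ (approx_conv y) eps He) as [N HN].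
  exists N. intros n m Hn Hm. rewrite approx_image_dist. auto.
Qed.

Definition urysohn_emb (y : Y) : U :=
  proj1_sig (constructive_indefinite_description _ (HUc _ (approx_image_cauchy y))).

Lemma urysohn_emb_conv y : seq_conv (approx_image y) (urysohn_emb y).
Proof. unfold urysohn_emb. destruct constructive_indefinite_description; auto. Qed.

Lemma urysohn_emb_isometric : isometric_embedding urysohn_emb.
Proof.
  intros y y'. apply (UL_sequence (fun m => dist (approx_image y m) (approx_image y' m))).
  - apply dist_seq_conv; apply urysohn_emb_conv.
  - eapply Un_cv_ext; [intros m; symmetry; apply approx_image_dist|].
    apply (dist_seq_conv (fun m => snd (approx y m)) (fun m => snd (approx y' m))); apply approx_conv.
Qed.
End UrysohnEmbedding.

(** * The space of bounded 1-Lipschitz functions *)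

Section LipSpace.
Variables (X : MetricSpace) (x0 : X) (Mn : nat).
Local Notation Mb := (INR Mn).

Definition lipschitz1 (h : X -> R) : Prop := forall x y, Rabs (h x - h y) <= dist x y.

Definition bounded_lip := {h : X -> R | lipschitz1 h /\ forall x, 0 <= h x <= Mb}.

Definition sup_dist (h h' : bounded_lip) : R :=
  sup_img (fun x => Rabs (proj1_sig h x - proj1_sig h' x)).

Lemma bounded_lip_diff (h h' : bounded_lip) x : Rabs (proj1_sig h x - proj1_sig h' x) <= Mb.
Proof.
  destruct h as [h [Hl Hh]], h' as [h' [Hl' Hh']]. simpl.
  specialize (Hh x). specialize (Hh' x). apply Rabs_le. lra.
Qed.

Lemma sup_dist_ge h h' x : Rabs (proj1_sig h x - proj1_sig h' x) <= sup_dist h h'.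
Proof. apply (sup_img_ub (fun y => Rabs (proj1_sig h y - proj1_sig h' y)) Mb). intros; apply bounded_lip_diff. Qed.

Lemma sup_dist_le h h' B : (forall x, Rabs (proj1_sig h x - proj1_sig h' x) <= B) -> sup_dist h h' <= B.
Proof. apply (sup_img_least (fun y => Rabs (proj1_sig h y - proj1_sig h' y)) _ x0). Qed.

Definition LipSpace : MetricSpace.
Proof.
  refine {| carrier := bounded_lip; dist := sup_dist |}.
  - intros h h'. pose proof (sup_dist_ge h h' x0). pose proof (Rabs_pos (proj1_sig h x0 - proj1_sig h' x0)). lra.
  - intros h h'. split; intros H.
    + apply sig_eq, functional_extensionality. intros x. pose proof (sup_dist_ge h h' x).
      rewrite H in H0. pose proof (Rabs_pos (proj1_sig h x - proj1_sig h' x)).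
      pose proof (Rle_abs (proj1_sig h x - proj1_sig h' x)).
      pose proof (Rle_abs (- (proj1_sig h x - proj1_sig h' x))) as Hneg. rewrite Rabs_Ropp in Hneg. lra.
    + subst. apply Rle_antisym.
      * apply sup_dist_le. intros x. rewrite Rminus_diag, Rabs_R0. lra.
      * pose proof (sup_dist_ge h' h' x0). pose proof (Rabs_pos (proj1_sig h' x0 - proj1_sig h' x0)). lra.
  - intros h h'. apply Rle_antisym; apply sup_dist_le; intros x; rewrite Rabs_minus_sym; apply sup_dist_ge.
  - intros h1 h2 h3. apply sup_dist_le. intros x.
    pose proof (sup_dist_ge h1 h2 x). pose proof (sup_dist_ge h2 h3 x).
    pose proof (Rabs_triang (proj1_sig h1 x - proj1_sig h2 x) (proj1_sig h2 x - proj1_sig h3 x)).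
    replace (proj1_sig h1 x - proj1_sig h2 x + (proj1_sig h2 x - proj1_sig h3 x))
      with (proj1_sig h1 x - proj1_sig h3 x) in H1 by ring. lra.
Defined.

Lemma clamp_lipschitz1 h : lipschitz1 h -> lipschitz1 (fun x => clamp Mb (h x)).
Proof. intros H x y. eapply Rle_trans; [apply clamp_nonexpansive, pos_INR|apply H]. Qed.

Definition clamped_lip (h : X -> R) (H : lipschitz1 h) : LipSpace :=
  exist _ (fun x => clamp Mb (h x)) (conj (clamp_lipschitz1 h H) (fun x => clamp_bounds Mb (h x) (pos_INR Mn))).

Lemma clamped_lip_ext h h' H H' :
  (forall x, clamp Mb (h x) = clamp Mb (h' x)) -> clamped_lip h H = clamped_lip h' H'.
Proof. intros E. apply sig_eq, functional_extensionality. exact E. Qed.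

Lemma sup_dist_clamped_le h h' H H' B : 0 <= B -> (forall x, Rabs (h x - h' x) <= B) ->
  dist (clamped_lip h H) (clamped_lip h' H') <= B.
Proof.
  intros HB Hx. apply sup_dist_le. intros x. simpl.
  eapply Rle_trans; [apply clamp_nonexpansive, pos_INR|apply Hx].
Qed.

Lemma dist_lipschitz1 (x : X) : lipschitz1 (fun y => dist x y).
Proof. intros a b. rewrite (dist_sym X x a), (dist_sym X x b). apply dist_reverse_tri. Qed.

Definition kuratowski (x : X) : LipSpace := clamped_lip (fun y => dist x y) (dist_lipschitz1 x).

Hypothesis HM : forall x y : X, dist x y <= Mb.

Lemma kuratowski_val x y : proj1_sig (kuratowski x) y = dist x y.
Proof. apply clamp_id. split; [apply dist_nonneg|apply HM]. Qed.

Lemma kuratowski_isometric : isometric_embedding kuratowski.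
Proof.
  intros x x'. apply Rle_antisym.
  - apply sup_dist_le. intros y. rewrite !kuratowski_val. apply dist_reverse_tri.
  - pose proof (sup_dist_ge (kuratowski x) (kuratowski x') x') as H.
    rewrite !kuratowski_val, dist_refl, Rminus_0_r, Rabs_right in H by (apply Rle_ge, dist_nonneg).
    exact H.
Qed.

Variables (Nt : nat -> list X).
Hypothesis HNt : forall k x, exists p, In p (Nt k) /\ dist x p < / (INR k + 1).

Definition grid (k : nat) : list R := map (fun j => INR j * / (INR k + 1)) (seq 0 (S (Mn * S k))).

Lemma grid_approx k y : 0 <= y <= Mb -> exists v, In v (grid k) /\ Rabs (v - y) <= / (INR k + 1).
Proof.
  intros Hy. set (d := / (INR k + 1)). pose proof (inv_succ_pos k) as Hd. fold d in Hd.
  destruct (exists_nat_floor y d (proj1 Hy) Hd) as [j [Hj1 Hj2]].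
  exists (INR j * d). split; [|apply Rabs_le; lra].
  apply in_map_iff. exists j. split; [reflexivity|]. apply in_seq. split; [lia|].
  enough (INR j <= INR (Mn * S k)) by (apply INR_le in H; lia).
  rewrite mult_INR, S_INR. apply (Rmult_le_reg_r d); [exact Hd|]. rewrite Rmult_assoc.
  replace ((INR k + 1) * d) with 1 by (unfold d; field; pose proof (pos_INR k); lra). lra.
Qed.

Definition cone_min (l : list (X * R)) (x : X) : R :=
  fold_right (fun pv acc => Rmin (snd pv + dist x (fst pv)) acc) Mb l.

Lemma Rmin_lipschitz1 (f g : X -> R) : lipschitz1 f -> lipschitz1 g -> lipschitz1 (fun x => Rmin (f x) (g x)).
Proof.
  intros Hf Hg x y. specialize (Hf x y). specialize (Hg x y). revert Hf Hg.
  unfold Rmin; repeat destruct Rle_dec; unfold Rabs; repeat destruct Rcase_abs; lra.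
Qed.

Lemma cone_min_lipschitz1 l : lipschitz1 (cone_min l).
Proof.
  induction l as [|[p v] l IH]; simpl.
  - intros x y. rewrite Rminus_diag, Rabs_R0. apply dist_nonneg.
  - apply (Rmin_lipschitz1 (fun x => v + dist x p)); auto. intros x y.
    replace (v + dist x p - (v + dist y p)) with (dist x p - dist y p) by ring. apply dist_reverse_tri.
Qed.

Lemma cone_min_lower (h : X -> R) d l x : 0 <= d -> (forall y, h y <= Mb) -> lipschitz1 h ->
  (forall p v, In (p, v) l -> h p - d <= v) -> h x - d <= cone_min l x.
Proof.
  intros Hd HMh Hh Hl. induction l as [|[p v] l IH]; simpl.
  - specialize (HMh x). lra.
  - apply Rmin_glb.
    + pose proof (Hl p v (or_introl eq_refl)). pose proof (Rle_abs (h x - h p)). pose proof (Hh x p). lra.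
    + apply IH. intros q w Hq. apply Hl. right; exact Hq.
Qed.

Lemma cone_min_upper l p v x : In (p, v) l -> cone_min l x <= v + dist x p.
Proof.
  induction l as [|[q w] l IH]; simpl; [tauto|]. intros [E|H].
  - inversion E; subst. apply Rmin_l.
  - eapply Rle_trans; [apply Rmin_r|auto].
Qed.

Fixpoint grid_labelings (k : nat) (net : list X) : list (list (X * R)) :=
  match net with
  | nil => nil :: nil
  | p :: ps => flat_map (fun v => map (cons (p, v)) (grid_labelings k ps)) (grid k)
  end.

Lemma grid_labelings_complete k (v : X -> R) net : (forall p, In p net -> In (v p) (grid k)) ->
  In (map (fun p => (p, v p)) net) (grid_labelings k net).
Proof.
  induction net as [|p ps IH]; intros H; [left; reflexivity|]. cbn [map grid_labelings].
  apply in_flat_map. exists (v p). split; [apply H; left; reflexivity|].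
  apply in_map, IH. intros q Hq; apply H; right; exact Hq.
Qed.

Definition lip_grid (k : nat) : list LipSpace :=
  map (fun l => clamped_lip (cone_min l) (cone_min_lipschitz1 l)) (grid_labelings k (Nt k)).

Lemma bounded_lip_eta (h : LipSpace) : h = clamped_lip (proj1_sig h) (proj1 (proj2_sig h)).
Proof.
  apply sig_eq, functional_extensionality. intros x. symmetry. apply clamp_id, (proj2 (proj2_sig h)).
Qed.

Lemma lip_grid_dense (h : LipSpace) eps : 0 < eps -> exists k z, In z (lip_grid k) /\ dist z h < eps.
Proof.
  intros He. rewrite (bounded_lip_eta h).
  set (f := proj1_sig h). destruct (proj2_sig h) as [Hl Hr]; fold f in Hl, Hr.
  destruct (inv_succ_lt (eps / 3) ltac:(lra)) as [k Hk].
  set (d := / (INR k + 1)) in Hk. pose proof (inv_succ_pos k) as Hd. fold d in Hd.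
  destruct (choice _ (fun p => grid_approx k (f p) (Hr p))) as [v Hv]. fold d in Hv.
  set (l := map (fun p => (p, v p)) (Nt k)).
  exists k, (clamped_lip (cone_min l) (cone_min_lipschitz1 l)). split.
  - apply in_map_iff. exists l. split; [reflexivity|]. apply grid_labelings_complete. intros p _; apply Hv.
  - apply Rle_lt_trans with (3 * d); [|lra].
    apply sup_dist_clamped_le; [lra|]. intros x. apply Rabs_le. split.
    + enough (f x - d <= cone_min l x) by lra.
      apply cone_min_lower; auto; [lra|intros y; apply Hr|].
      intros p w Hp. apply in_map_iff in Hp. destruct Hp as [q [E _]]. injection E as <- <-.
      pose proof (proj2 (Hv q)) as Hq. rewrite Rabs_minus_sym in Hq. pose proof (Rle_abs (f q - v q)). lra.
    + destruct (HNt k x) as [p [Hp Dp]]. fold d in Dp.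
      assert (Hin : In (p, v p) l) by (apply in_map_iff; exists p; auto).
      pose proof (cone_min_upper l p (v p) x Hin). pose proof (proj2 (Hv p)).
      pose proof (Rle_abs (v p - f p)). pose proof (Hl p x). pose proof (Rle_abs (f p - f x)).
      rewrite (dist_sym X p x) in H2. lra.
Qed.
End LipSpace.

(** * Rakotch moduli *)

Record rakotch_modulus (psi : R -> R) : Prop := {
  modulus_mono : forall a b, 0 <= a -> a <= b -> psi a <= psi b;
  modulus_subadditive : forall a b, 0 <= a -> 0 <= b -> psi (a + b) <= psi a + psi b;
  modulus_range : forall t, 0 <= t -> 0 <= psi t <= t;
  modulus_ratio : forall a, 0 < a -> exists c, 0 <= c /\ c < 1 /\ forall t, a < t -> psi t <= c * t
}.

Lemma rakotch_modulus_0 psi : rakotch_modulus psi -> psi 0 = 0.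
Proof. intros Hpsi. pose proof (modulus_range psi Hpsi 0 (Rle_refl 0)). lra. Qed.

Lemma rakotch_modulus_linear L : 0 <= L -> L < 1 -> rakotch_modulus (fun t => L * t).
Proof.
  intros H0 H1. split; intros; try nra.
  exists L. repeat split; auto. intros; lra.
Qed.

Lemma rakotch_modulus_zero : rakotch_modulus (fun _ => 0).
Proof.
  split; intros; try lra.
  exists 0. repeat split; intros; lra.
Qed.

Lemma rakotch_modulus_max p q :
  rakotch_modulus p -> rakotch_modulus q -> rakotch_modulus (fun t => Rmax (p t) (q t)).
Proof.
  intros [P1 P2 P3 P4] [Q1 Q2 Q3 Q4]. split.
  - intros a b Ha Hab. pose proof (P1 a b Ha Hab). pose proof (Q1 a b Ha Hab).
    unfold Rmax; repeat destruct Rle_dec; lra.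
  - intros a b Ha Hb. pose proof (P2 a b Ha Hb). pose proof (Q2 a b Ha Hb).
    pose proof (P3 a Ha). pose proof (Q3 a Ha). pose proof (P3 b Hb). pose proof (Q3 b Hb).
    unfold Rmax; repeat destruct Rle_dec; lra.
  - intros t Ht. pose proof (P3 t Ht). pose proof (Q3 t Ht). unfold Rmax; destruct Rle_dec; lra.
  - intros a Ha. destruct (P4 a Ha) as [c1 [C1 [C2 C3]]]. destruct (Q4 a Ha) as [c2 [D1 [D2 D3]]].
    exists (Rmax c1 c2). split; [eapply Rle_trans; [apply C1|apply Rmax_l]|].
    split; [unfold Rmax; destruct Rle_dec; lra|].
    intros t Ht. specialize (C3 t Ht). specialize (D3 t Ht).
    pose proof (Rmax_l c1 c2). pose proof (Rmax_r c1 c2). apply Rmax_lub; nra.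
Qed.

Definition list_max_modulus (l : list (R -> R)) : R -> R :=
  fold_right (fun p acc t => Rmax (p t) (acc t)) (fun _ => 0) l.

Lemma list_max_modulus_rakotch l :
  (forall p, In p l -> rakotch_modulus p) -> rakotch_modulus (list_max_modulus l).
Proof.
  induction l as [|p l IH]; intros Hl; [apply rakotch_modulus_zero|].
  apply rakotch_modulus_max; [apply Hl; left; reflexivity|]. apply IH. intros q Hq; apply Hl; right; exact Hq.
Qed.

Lemma list_max_modulus_ge l p t : In p l -> p t <= list_max_modulus l t.
Proof.
  induction l as [|q l IH]; simpl; [tauto|]. intros [<-|Hp]; [apply Rmax_l|].
  eapply Rle_trans; [apply IH, Hp|apply Rmax_r].
Qed.

Lemma rakotch_modulus_iter_vanish psi r0 : rakotch_modulus psi -> 0 <= r0 ->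
  forall a, 0 < a -> exists N, forall n, (n >= N)%nat -> Nat.iter n psi r0 <= a.
Proof.
  intros Hpsi Hr0 a Ha. destruct (modulus_ratio psi Hpsi a Ha) as [c [C0 [C1 C2]]].
  assert (Hnn : forall n, 0 <= Nat.iter n psi r0).
  { induction n; simpl; [exact Hr0|]. apply (modulus_range psi Hpsi); auto. }
  assert (Hdec : forall n, Nat.iter (S n) psi r0 <= Nat.iter n psi r0).
  { intros n. apply (modulus_range psi Hpsi), Hnn. }
  (* Above the level a the iterates decrease geometrically with ratio c. *)
  assert (Hgeom : forall n, Nat.iter n psi r0 <= a \/ Nat.iter n psi r0 <= c ^ n * r0).
  { induction n as [|n [IH|IH]]; [right; simpl; lra|left; pose proof (Hdec n); lra|].
    destruct (Rle_dec (Nat.iter n psi r0) a) as [H|H]; [left; pose proof (Hdec n); lra|].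
    right. simpl. eapply Rle_trans; [apply C2; lra|]. rewrite Rmult_assoc. apply Rmult_le_compat_l; lra. }
  destruct (pow_lt_1_zero c ltac:(rewrite Rabs_right; lra) (a / (r0 + 1)) ltac:(apply Rdiv_lt_0_compat; lra))
    as [N HN].
  assert (HaN : Nat.iter N psi r0 <= a).
  { destruct (Hgeom N) as [H|H]; [exact H|]. specialize (HN N (le_n N)).
    rewrite Rabs_right in HN by (apply Rle_ge, pow_le; auto).
    apply (Rmult_lt_compat_r (r0 + 1)) in HN; [|lra].
    unfold Rdiv in HN. rewrite Rmult_assoc, Rinv_l in HN by lra.
    pose proof (pow_le c N C0). nra. }
  exists N. induction 1; [exact HaN|]. pose proof (Hdec m). lra.
Qed.

Lemma modulus_continuous {M N : MetricSpace} (f : M -> N) psi :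
  rakotch_modulus psi -> has_modulus f psi -> continuous_map f.
Proof.
  intros Hpsi Hf x eps He. exists eps. split; [exact He|]. intros y Hxy.
  pose proof (Hf x y). pose proof (modulus_range psi Hpsi (dist x y) (dist_nonneg M x y)). lra.
Qed.

Lemma modulus_rakotch_contraction {M N : MetricSpace} (f : M -> N) psi :
  rakotch_modulus psi -> has_modulus f psi -> rakotch_contraction f.
Proof.
  intros Hpsi Hf. exists psi. split; [intros t Ht; apply (modulus_range psi Hpsi t Ht)|]. split; [exact Hf|].
  intros a Ha. destruct (modulus_ratio psi Hpsi a Ha) as [c [_ [C1 C2]]]. exists c. split; [exact C1|].
  intros t Ht. unfold Rdiv. apply (Rmult_le_reg_r t); [lra|].
  rewrite Rmult_assoc, Rinv_l by lra. specialize (C2 t Ht). lra.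
Qed.

Section RakotchEnvelope.
Variables (X Y : MetricSpace) (f : X -> Y).
Hypothesis Hf : rakotch_contraction f.

Lemma rakotch_nonexpansive s t : dist (f s) (f t) <= dist s t.
Proof.
  destruct Hf as [phi [_ [Hd Hr]]]. pose proof (dist_nonneg X s t).
  destruct (Req_dec (dist s t) 0) as [E|E].
  - apply (dist_eq0 X) in E. subst. rewrite !dist_refl. lra.
  - destruct (Hr (dist s t / 2) ltac:(lra)) as [c [Hc Hc2]].
    specialize (Hc2 (dist s t) ltac:(lra)). specialize (Hd s t).
    apply (Rmult_le_compat_r (dist s t)) in Hc2; [|lra].
    unfold Rdiv in Hc2. rewrite Rmult_assoc, Rinv_l in Hc2 by lra. nra.
Qed.

Lemma rakotch_ratio_exists k : exists c, 0 <= c /\ c < 1 /\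
  forall s t, / (INR k + 1) < dist s t -> dist (f s) (f t) <= c * dist s t.
Proof.
  destruct Hf as [phi [_ [Hd Hr]]]. pose proof (inv_succ_pos k).
  destruct (Hr _ (inv_succ_pos k)) as [c [Hc Hc2]].
  exists (Rmax 0 c). split; [apply Rmax_l|]. split; [unfold Rmax; destruct Rle_dec; lra|].
  intros s t Hst. specialize (Hc2 _ Hst). specialize (Hd s t).
  apply (Rmult_le_compat_r (dist s t)) in Hc2; [|lra].
  unfold Rdiv in Hc2. rewrite Rmult_assoc, Rinv_l in Hc2 by lra.
  pose proof (Rmax_r 0 c). nra.
Qed.

Definition rakotch_ratio k := proj1_sig (constructive_indefinite_description _ (rakotch_ratio_exists k)).

Lemma rakotch_ratio_spec k : 0 <= rakotch_ratio k /\ rakotch_ratio k < 1 /\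
  forall s t, / (INR k + 1) < dist s t -> dist (f s) (f t) <= rakotch_ratio k * dist s t.
Proof. unfold rakotch_ratio. destruct constructive_indefinite_description; auto. Qed.

(* Each bound d(f s, f t) <= [affine_bound k (d(s, t))] holds since f is nonexpansive below
   1/(k+1) and a c_k-contraction above it; the envelope is concave, hence subadditive. *)
Definition affine_bound k t := (1 - rakotch_ratio k) * / (INR k + 1) + rakotch_ratio k * t.
Definition affine_inf t := inf_img (fun k => affine_bound k t).
Definition rakotch_envelope t := Rmin t (affine_inf t).

Lemma affine_inf_le t k : affine_inf t <= affine_bound k t.
Proof.
  apply (inf_img_lb (fun k => affine_bound k t) (- Rabs t)). intros j.
  unfold affine_bound. pose proof (rakotch_ratio_spec j) as [? [? _]]. pose proof (inv_succ_pos j).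
  pose proof (Rle_abs (- t)). rewrite Rabs_Ropp in H2. pose proof (Rabs_pos t). nra.
Qed.

Lemma affine_inf_ge t B : (forall k, B <= affine_bound k t) -> B <= affine_inf t.
Proof. apply (inf_img_greatest (fun k => affine_bound k t) B 0%nat). Qed.

Lemma affine_inf_nonneg t : 0 <= t -> 0 <= affine_inf t.
Proof.
  intros Ht. apply affine_inf_ge. intros k. unfold affine_bound.
  pose proof (rakotch_ratio_spec k) as [? [? _]]. pose proof (inv_succ_pos k). nra.
Qed.

Lemma rakotch_envelope_scale l t : 0 <= l <= 1 -> 0 <= t -> l * rakotch_envelope t <= rakotch_envelope (l * t).
Proof.
  intros Hl Ht. assert (l * affine_inf t <= affine_inf (l * t)).
  { apply affine_inf_ge. intros k. pose proof (affine_inf_le t k).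
    apply Rle_trans with (l * affine_bound k t); [nra|]. unfold affine_bound.
    pose proof (rakotch_ratio_spec k) as [C0 [C1 _]]. pose proof (inv_succ_pos k).
    assert (0 <= (1 - l) * ((1 - rakotch_ratio k) * / (INR k + 1))) by (apply Rmult_le_pos; nra).
    nra. }
  pose proof (affine_inf_nonneg t Ht). unfold rakotch_envelope, Rmin. repeat destruct Rle_dec; nra.
Qed.

Lemma rakotch_envelope_modulus : rakotch_modulus rakotch_envelope.
Proof.
  split.
  - intros a b Ha Hab.
    enough (affine_inf a <= affine_inf b) by (unfold rakotch_envelope, Rmin; repeat destruct Rle_dec; lra).
    apply affine_inf_ge. intros k. eapply Rle_trans; [apply (affine_inf_le a k)|].
    unfold affine_bound. pose proof (rakotch_ratio_spec k) as [? [? _]]. nra.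
  - intros a b Ha Hb. destruct (Req_dec (a + b) 0) as [E|E].
    + replace a with 0 by lra. replace b with 0 by lra. rewrite Rplus_0_r.
      pose proof (affine_inf_nonneg 0 (Rle_refl 0)). unfold rakotch_envelope, Rmin; destruct Rle_dec; lra.
    + pose proof (rakotch_envelope_scale (a / (a + b)) (a + b)) as Sa.
      pose proof (rakotch_envelope_scale (b / (a + b)) (a + b)) as Sb.
      replace (a / (a + b) * (a + b)) with a in Sa by (field; lra).
      replace (b / (a + b) * (a + b)) with b in Sb by (field; lra).
      assert (0 <= a / (a + b) <= 1 /\ 0 <= b / (a + b) <= 1) as [Ha' Hb'].
      { split; split; unfold Rdiv;
          try (apply Rmult_le_pos; [lra|left; apply Rinv_0_lt_compat; lra]);
          apply (Rmult_le_reg_r (a + b)); try lra; rewrite Rmult_assoc, Rinv_l; lra. }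
      specialize (Sa Ha' ltac:(lra)). specialize (Sb Hb' ltac:(lra)).
      replace (rakotch_envelope (a + b))
        with (a / (a + b) * rakotch_envelope (a + b) + b / (a + b) * rakotch_envelope (a + b)) by (field; lra).
      lra.
  - intros t Ht. pose proof (affine_inf_nonneg t Ht). unfold rakotch_envelope, Rmin; destruct Rle_dec; lra.
  - intros a Ha. destruct (inv_succ_lt (a / 2) ltac:(lra)) as [k Hk].
    pose proof (rakotch_ratio_spec k) as [C0 [C1 _]].
    exists ((1 + rakotch_ratio k) / 2). split; [lra|]. split; [lra|].
    intros t Ht. unfold rakotch_envelope. eapply Rle_trans; [apply Rmin_r|].
    eapply Rle_trans; [apply (affine_inf_le t k)|]. unfold affine_bound. nra.
Qed.

Lemma rakotch_envelope_dominates : has_modulus f rakotch_envelope.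
Proof.
  intros s t. apply Rmin_glb; [apply rakotch_nonexpansive|]. apply affine_inf_ge. intros k.
  pose proof (rakotch_ratio_spec k) as [C0 [C1 C2]]. pose proof (inv_succ_pos k). unfold affine_bound.
  destruct (Rle_dec (dist s t) (/ (INR k + 1))).
  - pose proof (rakotch_nonexpansive s t). nra.
  - specialize (C2 s t ltac:(lra)). nra.
Qed.
End RakotchEnvelope.

Lemma rakotch_has_modulus {X Y : MetricSpace} (f : X -> Y) :
  rakotch_contraction f -> exists psi, rakotch_modulus psi /\ has_modulus f psi.
Proof.
  intros Hf. exists (rakotch_envelope X Y f Hf).
  split; [apply rakotch_envelope_modulus|apply rakotch_envelope_dominates].
Qed.

(** * Attractors of systems with a common modulus *)

Section CommonModulus.
Variables (M : MetricSpace) (G : list (M -> M)) (psi : R -> R) (A : M -> Prop).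
Hypotheses (Hpsi : rakotch_modulus psi) (HG : forall g, In g G -> has_modulus g psi).
Hypotheses (HA : nonempty_compact A) (Hinv : forall y, fs_image G A y <-> A y).

Definition hausdorff_within (K : M -> Prop) (r : R) : Prop :=
  (forall x, K x -> exists a, A a /\ dist x a <= r) /\
  (forall a, A a -> exists x, K x /\ dist x a <= r).

Lemma hausdorff_within_image K r : 0 <= r -> hausdorff_within K r -> hausdorff_within (fs_image G K) (psi r).
Proof.
  intros Hr [HKA HAK]. split.
  - intros y [g [Hg [x [Hx ->]]]]. destruct (HKA x Hx) as [a [Ha Da]].
    exists (g a). split; [apply Hinv; exists g; split; [|exists a]; auto|].
    eapply Rle_trans; [apply HG, Hg|]. apply (modulus_mono psi Hpsi); auto. apply dist_nonneg.
  - intros a' Ha'. apply Hinv in Ha'. destruct Ha' as [g [Hg [a [Ha ->]]]].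
    destruct (HAK a Ha) as [x [Hx Dx]]. exists (g x). split; [exists g; split; [|exists x]; auto|].
    eapply Rle_trans; [apply HG, Hg|]. apply (modulus_mono psi Hpsi); auto. apply dist_nonneg.
Qed.

Lemma hausdorff_within_iter K r : 0 <= r -> hausdorff_within K r ->
  forall n, hausdorff_within (fs_iter G n K) (Nat.iter n psi r).
Proof.
  intros Hr HK. induction n as [|n IH]; [exact HK|]. apply hausdorff_within_image; [|exact IH].
  clear IH. induction n as [|n IH]; [exact Hr|]. apply (modulus_range psi Hpsi), IH.
Qed.

Lemma compact_hausdorff_within K : nonempty_compact K -> exists r, 0 <= r /\ hausdorff_within K r.
Proof.
  intros [[k Kk] HK]. destruct HA as [[a Aa] HAc].
  destruct (compact_set_bounded K HK) as [BK [HBK HK']]. destruct (compact_set_bounded A HAc) as [BA [HBA HA']].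
  exists (BK + dist k a + BA). pose proof (dist_nonneg M k a). split; [lra|]. split.
  - intros x Kx. exists a. split; [exact Aa|].
    pose proof (HK' x k Kx Kk). pose proof (dist_tri M x k a). lra.
  - intros b Ab. exists k. split; [exact Kk|].
    pose proof (HA' a b Aa Ab). pose proof (dist_tri M k a b). lra.
Qed.

Lemma invariant_compact_is_attractor : is_attractor G A.
Proof.
  split; [exact HA|]. split; [exact Hinv|].
  intros K HK. destruct (compact_hausdorff_within K HK) as [r [Hr HKr]].
  intros eps He. destruct (rakotch_modulus_iter_vanish psi r Hpsi Hr (eps / 2) ltac:(lra)) as [N HN].
  exists N. intros n Hn. destruct (hausdorff_within_iter K r Hr HKr n) as [H1 H2]. specialize (HN n Hn).
  split.
  - intros x Hx. destruct (H1 x Hx) as [a [Ha Da]]. exists a. split; [exact Ha|lra].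
  - intros a Ha. destruct (H2 a Ha) as [x [Hx Dx]]. exists x. split; [exact Hx|lra].
Qed.
End CommonModulus.

(** * Lifting function systems to the Urysohn space *)

Section UrysohnLift.
Variables (X : MetricSpace) (x0 : X) (Mn : nat).
Hypothesis HM : forall x y : X, dist x y <= INR Mn.
Local Notation Z := (LipSpace X x0 Mn).
Local Notation kur := (kuratowski X x0 Mn).
Variables (U : MetricSpace) (j : Z -> U).
Hypothesis Hj : isometric_embedding j.

Definition emb (x : X) : U := j (kur x).

Lemma emb_isometric : isometric_embedding emb.
Proof. intros x y. unfold emb. rewrite Hj. apply kuratowski_isometric, HM. Qed.

Lemma profile_lipschitz1 u : lipschitz1 X (fun x => dist u (emb x)).
Proof.
  intros x y. rewrite <- emb_isometric, (dist_sym U u), (dist_sym U u).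
  apply dist_reverse_tri.
Qed.

Definition profile (u : U) : Z := clamped_lip X x0 Mn _ (profile_lipschitz1 u).

Lemma profile_emb x : profile (emb x) = kur x.
Proof. apply clamped_lip_ext. intros y. rewrite emb_isometric. reflexivity. Qed.

Lemma profile_nonexpansive u v : dist (profile u) (profile v) <= dist u v.
Proof.
  apply sup_dist_clamped_le; [apply dist_nonneg|]. intros x. apply dist_reverse_tri.
Qed.

Section Extension.
Variables (f : X -> X) (psi : R -> R).

(* McShane-type extension of f to Z: (F h)(x) = inf_s d(f s, x) + psi(|h - kur s|). *)
Definition extension_term (h : Z) (x s : X) : R := dist (f s) x + Rmax 0 (psi (dist h (kur s))).

Lemma extension_term_nonneg h x s : 0 <= extension_term h x s.
Proof.
  unfold extension_term. pose proof (dist_nonneg X (f s) x). pose proof (Rmax_l 0 (psi (dist h (kur s)))). lra.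
Qed.

Lemma extension_inf_shift (h h' : Z) x x' c : (forall s, extension_term h x s <= extension_term h' x' s + c) ->
  inf_img (extension_term h x) <= inf_img (extension_term h' x') + c.
Proof. apply (inf_img_shift _ _ _ x0 0); apply extension_term_nonneg. Qed.

Lemma extension_lipschitz1 h : lipschitz1 X (fun x => inf_img (extension_term h x)).
Proof.
  assert (Hone : forall x y, inf_img (extension_term h x) <= inf_img (extension_term h y) + dist x y).
  { intros x y. apply extension_inf_shift. intros s. unfold extension_term.
    pose proof (dist_tri X (f s) y x). rewrite (dist_sym X y x) in H. lra. }
  intros x y. pose proof (Hone x y). pose proof (Hone y x). rewrite (dist_sym X y x) in H0.
  apply Rabs_le. lra.
Qed.

Definition modulus_extension (h : Z) : Z := clamped_lip X x0 Mn _ (extension_lipschitz1 h).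

Hypotheses (Hpsi : rakotch_modulus psi) (Hf : has_modulus f psi).

Lemma modulus_extension_kuratowski t : modulus_extension (kur t) = kur (f t).
Proof.
  apply clamped_lip_ext. intros x. f_equal. apply Rle_antisym.
  - eapply Rle_trans; [apply (inf_img_lb _ 0 t), extension_term_nonneg|].
    unfold extension_term. rewrite dist_refl, rakotch_modulus_0, Rmax_left by (auto; lra). lra.
  - apply (inf_img_greatest _ _ x0). intros s. unfold extension_term. rewrite (kuratowski_isometric X x0 Mn HM).
    pose proof (Hf t s). pose proof (Rmax_r 0 (psi (dist t s))). pose proof (dist_tri X (f t) (f s) x). lra.
Qed.

Lemma modulus_extension_modulus : has_modulus modulus_extension psi.
Proof.
  assert (Hone : forall (h h' : Z) x,
    inf_img (extension_term h x) <= inf_img (extension_term h' x) + psi (dist h h')).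
  { intros h h' x. apply extension_inf_shift. intros s. unfold extension_term.
    pose proof (dist_nonneg Z h (kur s)). pose proof (dist_nonneg Z h' (kur s)). pose proof (dist_nonneg Z h h').
    pose proof (modulus_mono psi Hpsi _ _ H (dist_tri Z h h' (kur s))).
    pose proof (modulus_subadditive psi Hpsi _ _ H1 H0).
    rewrite !Rmax_right by (apply (modulus_range psi Hpsi); auto). lra. }
  intros h h'. apply sup_dist_clamped_le; [apply (modulus_range psi Hpsi), dist_nonneg|]. intros x.
  pose proof (Hone h h' x). pose proof (Hone h' h x). rewrite (dist_sym Z h' h) in H0.
  apply Rabs_le. lra.
Qed.

Definition lift (u : U) : U := j (modulus_extension (profile u)).

Lemma lift_emb x : lift (emb x) = emb (f x).
Proof. unfold lift. rewrite profile_emb, modulus_extension_kuratowski. reflexivity. Qed.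

Lemma lift_modulus : has_modulus lift psi.
Proof.
  intros u v. unfold lift. rewrite Hj. eapply Rle_trans; [apply modulus_extension_modulus|].
  apply (modulus_mono psi Hpsi); [apply dist_nonneg|apply profile_nonexpansive].
Qed.
End Extension.

Section LiftedSystem.
Hypothesis HX : compact_space X.
Variables (F : list (X -> X)) (P : (R -> R) -> Prop).
Hypotheses (HFne : F <> nil) (Hcov : forall x, exists f, In f F /\ exists y, x = f y).
Hypothesis HF : forall f, In f F -> exists psi, rakotch_modulus psi /\ has_modulus f psi /\ P psi.

Definition admissible_modulus (f : X -> X) (psi : R -> R) : Prop :=
  rakotch_modulus psi /\ has_modulus f psi /\ P psi.

Definition modulus_of (f : X -> X) : R -> R := epsilon (inhabits (fun t : R => t)) (admissible_modulus f).

Lemma modulus_of_spec f : In f F -> admissible_modulus f (modulus_of f).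
Proof. intros H. unfold modulus_of. apply epsilon_spec, HF, H. Qed.

Lemma lift_modulus_of_emb f x : In f F -> lift f (modulus_of f) (emb x) = emb (f x).
Proof. intros Hf. destruct (modulus_of_spec f Hf) as [H1 [H2 _]]. exact (lift_emb f _ H1 H2 x). Qed.

Definition lifted_system : list (U -> U) := map (fun f => lift f (modulus_of f)) F.

Definition emb_range (u : U) : Prop := exists x, emb x = u.

Lemma lifted_system_invariant u : fs_image lifted_system emb_range u <-> emb_range u.
Proof.
  split.
  - intros [g [Hg [u' [[x <-] ->]]]]. apply in_map_iff in Hg. destruct Hg as [f [<- Hf]].
    exists (f x). symmetry. apply lift_modulus_of_emb, Hf.
  - intros [x <-]. destruct (Hcov x) as [f [Hf [y ->]]]. exists (lift f (modulus_of f)).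
    split; [apply (in_map (fun f => lift f (modulus_of f))), Hf|].
    exists (emb y). split; [exists y; reflexivity|]. symmetry. apply lift_modulus_of_emb, Hf.
Qed.

Lemma lifted_system_modulus g : In g lifted_system ->
  has_modulus g (list_max_modulus (map modulus_of F)).
Proof.
  intros Hg. apply in_map_iff in Hg. destruct Hg as [f [<- Hf]]. intros u v.
  eapply Rle_trans; [apply (lift_modulus f _ (proj1 (modulus_of_spec f Hf)))|].
  apply list_max_modulus_ge, in_map, Hf.
Qed.

Lemma lifted_common_modulus : rakotch_modulus (list_max_modulus (map modulus_of F)).
Proof.
  apply list_max_modulus_rakotch. intros p Hp. apply in_map_iff in Hp. destruct Hp as [f [<- Hf]].
  apply modulus_of_spec, Hf.
Qed.

Lemma lifted_system_attractor : is_attractor lifted_system emb_range.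
Proof.
  apply (invariant_compact_is_attractor U _ _ _ lifted_common_modulus lifted_system_modulus).
  - split; [exists (emb x0), x0; reflexivity|]. apply isometric_image_compact; [apply emb_isometric|exact HX].
  - apply lifted_system_invariant.
Qed.

Lemma lifted_system_spec :
  function_system lifted_system /\
  (forall g, In g lifted_system -> exists psi, rakotch_modulus psi /\ has_modulus g psi /\ P psi) /\
  is_attractor lifted_system emb_range /\ isometric_to_subset X U emb_range.
Proof.
  split; [split|split; [|split]].
  - unfold lifted_system. destruct F; [contradiction|discriminate].
  - intros g Hg. exact (modulus_continuous g _ lifted_common_modulus (lifted_system_modulus g Hg)).
  - intros g Hg. apply in_map_iff in Hg. destruct Hg as [f [<- Hf]].
    destruct (modulus_of_spec f Hf) as [H1 [_ H3]]. exists (modulus_of f).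
    split; [exact H1|split; [apply lift_modulus, H1|exact H3]].
  - exact lifted_system_attractor.
  - exists emb. split; [exact emb_isometric|reflexivity].
Qed.
End LiftedSystem.
End UrysohnLift.

Lemma compact_space_nat_bound (X : MetricSpace) : compact_space X ->
  exists Mn : nat, forall x y : X, dist x y <= INR Mn.
Proof.
  intros HX. destruct (compact_set_bounded _ HX) as [B [_ HB]]. destruct (nat_above B) as [Mn HMn].
  exists Mn. intros x y. pose proof (HB x y I I). lra.
Qed.

Lemma compact_space_nets (X : MetricSpace) : compact_space X ->
  exists Nt : nat -> list X, forall k x, exists p, In p (Nt k) /\ dist x p < / (INR k + 1).
Proof.
  intros HX. apply (choice (fun k L => forall x, exists p, In p L /\ dist x p < / (INR k + 1))).
  intros k. destruct (compact_set_finite_net _ HX _ (inv_succ_pos k)) as [L HL].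
  exists L. intros x. exact (HL x I).
Qed.

Lemma compact_system_in_urysohn (U : MetricSpace) (HUc : complete U) (HUf : finite_extension_property U) (u0 : U)
  (X : MetricSpace) (HX : compact_space X) (x0 : X) (F : list (X -> X)) (P : (R -> R) -> Prop) :
  F <> nil -> (forall x, exists f, In f F /\ exists y, x = f y) ->
  (forall f, In f F -> exists psi, rakotch_modulus psi /\ has_modulus f psi /\ P psi) ->
  exists (G : list (U -> U)) (A : U -> Prop), function_system G /\
    (forall g, In g G -> exists psi, rakotch_modulus psi /\ has_modulus g psi /\ P psi) /\
    is_attractor G A /\ isometric_to_subset X U A.
Proof.
  intros HFne Hcov HF.
  destruct (compact_space_nat_bound X HX) as [Mn HM].
  destruct (compact_space_nets X HX) as [Nt HNt].
  pose proof (urysohn_emb_isometric _ U HUc HUf u0 _ (lip_grid_dense X x0 Mn Nt HNt)) as Hj.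
  eexists; eexists. exact (lifted_system_spec X x0 Mn HM U _ Hj HX F P HFne Hcov HF).
Qed.

Theorem theorem1p4 (U : MetricSpace) (HU : urysohn_space U)
  (X : MetricSpace) (HX : compact_space X) (Hne : inhabited X) :
  (rakotch_fractal X ->
     exists (G : list (U -> U)) (A : U -> Prop),
       function_system G /\ (forall g, In g G -> rakotch_contraction g) /\
       is_attractor G A /\ isometric_to_subset X U A) /\
  (banach_fractal X ->
     exists (G : list (U -> U)) (A : U -> Prop),
       function_system G /\ (forall g, In g G -> banach_contraction g) /\
       is_attractor G A /\ isometric_to_subset X U A).
Proof.
  destruct HU as [[s _] [HUc HUf]]. destruct Hne as [x0]. split.
  - intros [_ [F [[HFne _] [Hrak Hcov]]]].
    destruct (compact_system_in_urysohn U HUc HUf (s O) X HX x0 F (fun _ => True) HFne Hcov)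
      as [G [A [HG [Hmod HA]]]].
    { intros f Hf. destruct (rakotch_has_modulus f (Hrak f Hf)) as [psi [H1 H2]]. exists psi. auto. }
    exists G, A. split; [exact HG|split; [|exact HA]].
    intros g Hg. destruct (Hmod g Hg) as [psi [H1 [H2 _]]]. exact (modulus_rakotch_contraction g psi H1 H2).
  - intros [_ [F [[HFne _] [Hban Hcov]]]].
    destruct (compact_system_in_urysohn U HUc HUf (s O) X HX x0 F
      (fun psi => exists L, 0 <= L < 1 /\ psi = fun t => L * t) HFne Hcov) as [G [A [HG [Hmod HA]]]].
    { intros f Hf. destruct (Hban f Hf) as [L [L0 [L1 HL]]].
      exists (fun t => L * t). split; [apply rakotch_modulus_linear; auto|]. split; [exact HL|eauto]. }
    exists G, A. split; [exact HG|split; [|exact HA]].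
    intros g Hg. destruct (Hmod g Hg) as [psi [_ [Hpsi [L [HL ->]]]]]. exists L. split; [apply HL|].
    split; [apply HL|exact Hpsi].
Qed.
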